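(* Let $A\in\mathbb{C}^{n\times n}$, let $\|\cdot\|$ be any vector norm on $\mathbb{C}^n$ with induced matrix norm, and let $y_0\in\mathbb{C}^n\setminus\{0\}$. Then $$\max_{\hat z_0\in\mathbb{C}^n,\ \|\hat z_0\|=1}\ \limsup_{t\to+\infty}\frac{K(t,y_0,\hat z_0)}{K(t,y_0)}=1 .$$ Moreover, if $y_0$ satisfies the RLGE condition, then, with $K_\infty(t,y_0,\hat z_0)=\|Q_1(t)\hat z_0\|/\|Q_1(t)\hat y_0\|$ and $K_\infty(t,y_0)=\|Q_1(t)\|/\|Q_1(t)\hat y_0\|$, $$\max_{\hat z_0\in\mathbb{C}^n,\ \|\hat z_0\|=1}\ \limsup_{t\to+\infty}\frac{K_\infty(t,y_0,\hat z_0)}{K_\infty(t,y_0)}=1 .$$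
   Context: $\hat y_0=y_0/\|y_0\|$; $K(t,y_0,\hat z_0)=\|e^{tA}\hat z_0\|/\|e^{tA}\hat y_0\|$ and $K(t,y_0)=\|e^{tA}\|/\|e^{tA}\hat y_0\|$. Let $\lambda_1,\dots,\lambda_p$ be the distinct eigenvalues of $A$, $\omega_i=\operatorname{Im}\lambda_i$. Fix a Jordan basis $v^{(i,j,k)}$ ($i\le p$, $j\le d_i$ with $d_i$ the geometric multiplicity, $k\le m_{ij}$) of Jordan chains: $(A-\lambda_iI)v^{(i,j,1)}=0$, $(A-\lambda_iI)v^{(i,j,k)}=v^{(i,j,k-1)}$ for $k\ge2$; $V$ the matrix of these columns in lexicographic order, $w^{(i,j,k)}$ the rows of $V^{-1}$; $\alpha_{ijk}(u)=w^{(i,j,k)}u$. $\Lambda_1$ is the set of eigenvalues of maximal real part, $M_1=\max_{\lambda_i\in\Lambda_1}\max_j m_{ij}$, $Q_1(t)=\sum_{\lambda_i\in\Lambda_1, m_{ij}=M_1}e^{\sqrt{-1}\omega_it}v^{(i,j,1)}w^{(i,j,M_1)}$. $u$ satisfies RLGE if $\alpha_{ijM_1}(u)\ne0$ for some $(i,j)$ with $\lambda_i\in\Lambda_1$, $m_{ij}=M_1$. *)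

From HB Require Import structures.
From mathcomp Require Import all_boot all_order all_algebra.
From mathcomp Require Import all_classical all_reals all_analysis.
From mathcomp.real_closed Require Import complex.
Import Order.TTheory GRing.Theory Num.Theory.
Import numFieldNormedType.Exports.

Set Implicit Arguments.
Unset Strict Implicit.
Unset Printing Implicit Defensive.

Local Open Scope ring_scope.
Local Open Scope classical_set_scope.

Definition cabs (R : realType) (c : R[i]) : R := ComplexField.Normc.normc c.

Definition cis (R : realType) (x : R) : R[i] := Complex (cos x) (sin x).

Definition expmx (R : realType) (n : nat) (A : 'M[R[i]]_n) : 'M[R[i]]_n :=
  limn (fun N => \sum_(k < N) (k`!%:R^-1 *: A ^+ k)).

Definition etA (R : realType) (n : nat) (A : 'M[R[i]]_n) (t : R) : 'M[R[i]]_n :=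
  expmx (Complex t 0 *: A).

Definition is_vnorm (R : realType) (n : nat) (N : 'cV[R[i]]_n -> R) : Prop :=
  [/\ (forall x, 0 <= N x),
      (forall x, N x = 0 -> x = 0),
      (forall (c : R[i]) x, N (c *: x) = cabs c * N x)
    & (forall x y, N (x + y) <= N x + N y)].

Definition opnorm (R : realType) (n : nat) (N : 'cV[R[i]]_n -> R)
    (M : 'M[R[i]]_n) : R :=
  sup [set N (M *m x) | x in [set x | N x = 1]].

Definition nhat (R : realType) (n : nat) (N : 'cV[R[i]]_n -> R) (y : 'cV[R[i]]_n)
  : 'cV[R[i]]_n := Complex (N y)^-1 0 *: y.

Definition K3 (R : realType) (n : nat) (N : 'cV[R[i]]_n -> R) (A : 'M[R[i]]_n)
    (y0 z0 : 'cV[R[i]]_n) (t : R) : R :=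
  N (etA A t *m z0) / N (etA A t *m nhat N y0).
Definition K2 (R : realType) (n : nat) (N : 'cV[R[i]]_n -> R) (A : 'M[R[i]]_n)
    (y0 : 'cV[R[i]]_n) (t : R) : R :=
  opnorm N (etA A t) / N (etA A t *m nhat N y0).

Definition limsup_pinfty (R : realType) (f : R -> R) : \bar R :=
  limf_esup (fun t => (f t)%:E) +oo%R.

Definition max_limsup_eq1 (R : realType) (n : nat) (N : 'cV[R[i]]_n -> R)
    (F : 'cV[R[i]]_n -> R -> R) : Prop :=
  (forall z, N z = 1 -> (limsup_pinfty (F z) <= 1%:E)%E) /\
  (exists z, N z = 1 /\ limsup_pinfty (F z) = 1%:E).

(* Jordan basis data, 0-indexed: eigenvalue index i : 'I_p, chain index j < d i,
   position k < m i j in the chain; v i j k = v^{(i,j,k+1)} and w i j k = w^{(i,j,k+1)},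
   the rows of V^{-1} (characterized as the dual basis of the v's, which form a basis
   of C^n since there are n of them and they are biorthogonal to the w's). *)
Definition jordan_basis (R : realType) (n : nat) (A : 'M[R[i]]_n) (p : nat)
    (lam : 'I_p -> R[i]) (d : 'I_p -> nat) (m : 'I_p -> nat -> nat)
    (v : 'I_p -> nat -> nat -> 'cV[R[i]]_n) (w : 'I_p -> nat -> nat -> 'rV[R[i]]_n)
  : Prop :=
  [/\ injective lam,
      (forall i, (0 < d i)%N),
      (forall i j, (j < d i)%N -> (0 < m i j)%N),
      (forall i j, (j < d i)%N -> (A - (lam i)%:M) *m v i j 0%N = 0)
    & (forall i j k, (j < d i)%N -> (0 < k < m i j)%N ->
          (A - (lam i)%:M) *m v i j k = v i j k.-1)] /\
  (\sum_(i < p) \sum_(j < d i) m i j)%N = n /\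
  (forall i j k i' j' k', (j < d i)%N -> (k < m i j)%N ->
          (j' < d i')%N -> (k' < m i' j')%N ->
          w i j k *m v i' j' k' = ((i == i') && (j == j') && (k == k'))%:R%:M).

Definition inL1 (R : realType) (p : nat) (lam : 'I_p -> R[i]) (i : 'I_p) : bool :=
  [forall k : 'I_p, complex.Re (lam k) <= complex.Re (lam i)].

Definition M1 (R : realType) (p : nat) (lam : 'I_p -> R[i]) (d : 'I_p -> nat)
    (m : 'I_p -> nat -> nat) : nat :=
  (\max_(i < p | inL1 lam i) \max_(j < d i) m i j)%N.

Definition Q1 (R : realType) (n p : nat) (lam : 'I_p -> R[i]) (d : 'I_p -> nat)
    (m : 'I_p -> nat -> nat) (v : 'I_p -> nat -> nat -> 'cV[R[i]]_n)
    (w : 'I_p -> nat -> nat -> 'rV[R[i]]_n) (t : R) : 'M[R[i]]_n :=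
  \sum_(i < p | inL1 lam i) \sum_(j < d i | m i j == M1 lam d m)
     cis (complex.Im (lam i) * t) *: (v i j 0%N *m w i j (M1 lam d m).-1).

(* RLGE condition on u: alpha_{i j M1}(u) <> 0 for some (i,j) with lam i in Lambda_1
   and m i j = M1 *)
Definition RLGE (R : realType) (n p : nat) (lam : 'I_p -> R[i]) (d : 'I_p -> nat)
    (m : 'I_p -> nat -> nat) (w : 'I_p -> nat -> nat -> 'rV[R[i]]_n)
    (u : 'cV[R[i]]_n) : Prop :=
  exists (i : 'I_p) (j : nat), [/\ inL1 lam i, (j < d i)%N, m i j = M1 lam d m
    & w i j (M1 lam d m).-1 *m u != 0].

Definition Kinf3 (R : realType) (n : nat) (N : 'cV[R[i]]_n -> R) (Q : R -> 'M[R[i]]_n)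
    (y0 z0 : 'cV[R[i]]_n) (t : R) : R :=
  N (Q t *m z0) / N (Q t *m nhat N y0).
Definition Kinf2 (R : realType) (n : nat) (N : 'cV[R[i]]_n -> R) (Q : R -> 'M[R[i]]_n)
    (y0 : 'cV[R[i]]_n) (t : R) : R :=
  opnorm N (Q t) / N (Q t *m nhat N y0).

From HB Require Import structures.
From mathcomp Require Import all_boot all_order all_algebra.
From mathcomp Require Import all_classical all_reals all_analysis.
From mathcomp.real_closed Require Import complex.
From mathcomp Require Import ring lra.
Import Order.TTheory GRing.Theory Num.Theory.
Import numFieldNormedType.Exports.

(* Write M(t) for e^{tA} or Q_1(t). The quotient K(t,y0,z)/K(t,y0) equals
   N(M(t) z)/||M(t)||, which is at most 1 when N z = 1. All norms on C^n are
   equivalent, so unit vectors x_t nearly attaining ||M(t)|| have a cluster point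
   p as t -> +oo; since N(M(t) x_t) - N(M(t) p) <= ||M(t)|| N(x_t - p), the ratio
   at p comes arbitrarily close to 1 for arbitrarily large t.
   The quotients make sense because M(t) y0 never vanishes: e^{tA} has inverse
   e^{-tA} (Cauchy product of the exponential series), and under RLGE
   w^(i,j,1) Q_1(t) y0 = e^{i omega_i t} alpha_{i j M_1}(y0) <> 0. *)

Local Open Scope ring_scope.
Local Open Scope classical_set_scope.

Section Cabs.
Context {R : realType}.
Implicit Types (c d : R[i]).

Lemma cabs_ge0 c : 0 <= cabs c.
Proof. by case: c => a b; rewrite /cabs /= sqrtr_ge0. Qed.

Lemma cabsM c d : cabs (c * d) = cabs c * cabs d.
Proof. exact: ComplexField.Normc.normcM. Qed.

Lemma cabsD c d : cabs (c + d) <= cabs c + cabs d.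
Proof. exact: le_normcD. Qed.

Lemma cabs0 : cabs (0 : R[i]) = 0.
Proof. exact: ComplexField.Normc.normc0. Qed.

Lemma cabs1 : cabs (1 : R[i]) = 1.
Proof. exact: ComplexField.Normc.normc1. Qed.

Lemma cabsN c : cabs (- c) = cabs c.
Proof. exact: normcN. Qed.

Lemma cabs_real (r : R) : cabs (Complex r 0) = `|r|.
Proof. by rewrite /cabs /= expr0n /= addr0 sqrtr_sqr. Qed.

Lemma cabs_natrV k : cabs (k%:R^-1 : R[i]) = k%:R^-1.
Proof.
by rewrite -(rmorph_nat (real_complex R)) -fmorphV cabs_real ger0_norm.
Qed.

Lemma cabs_ge_Re c : `|complex.Re c| <= cabs c.
Proof.
case: c => a b; rewrite /cabs /= -(sqrtr_sqr a); apply: ler_wsqrtr.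
by rewrite lerDl sqr_ge0.
Qed.

Lemma cabs_ge_Im c : `|complex.Im c| <= cabs c.
Proof.
case: c => a b; rewrite /cabs /= -(sqrtr_sqr b); apply: ler_wsqrtr.
by rewrite lerDr sqr_ge0.
Qed.

Lemma cabs_le_ReIm c : cabs c <= `|complex.Re c| + `|complex.Im c|.
Proof.
case: c => a b; rewrite /cabs /=.
have h : 0 <= `|a| + `|b| by apply: addr_ge0.
rewrite -(ger0_norm h) -sqrtr_sqr; apply: ler_wsqrtr.
rewrite sqrrD -(real_normK (num_real a)) -(real_normK (num_real b)).
have h2 : 0 <= `|a| * `|b| *+ 2 by apply: mulrn_wge0; apply: mulr_ge0.
by rewrite -addrA [_ *+ 2 + _]addrC addrA lerDl.
Qed.

Lemma cabs_sum (I : Type) (s : seq I) (P : pred I) (f : I -> R[i]) :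
  cabs (\sum_(i <- s | P i) f i) <= \sum_(i <- s | P i) cabs (f i).
Proof.
elim/big_rec2: _ => [|i x y _ H]; first by rewrite cabs0.
exact: le_trans (cabsD _ _) (lerD (lexx _) H).
Qed.

Lemma cis_neq0 (x : R) : cis x != 0.
Proof.
apply/eqP => -[c0 s0]; have := cos2Dsin2 x.
by rewrite c0 s0 expr0n /= addr0 => /eqP; rewrite eq_sym oner_eq0.
Qed.

End Cabs.

Section Norm1.
Context {R : realType} {n : nat}.
Implicit Types (x : 'cV[R[i]]_n) (M : 'M[R[i]]_n).

Definition cnorm1 x : R := \sum_i cabs (x i 0).

Lemma cabs_le_cnorm1 x i : cabs (x i 0) <= cnorm1 x.
Proof.
rewrite /cnorm1 (bigD1 i) //= lerDl; apply: sumr_ge0 => j _; exact: cabs_ge0.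
Qed.

Lemma cnorm1Z (r : R) x : cnorm1 (Complex r 0 *: x) = `|r| * cnorm1 x.
Proof.
rewrite /cnorm1 mulr_sumr; apply: eq_bigr => i _.
by rewrite mxE cabsM cabs_real.
Qed.

Definition mxcabs M : R := \sum_i \sum_j cabs (M i j).

Lemma mxcabs_ge0 M : 0 <= mxcabs M.
Proof. by apply: sumr_ge0 => i _; apply: sumr_ge0 => j _; apply: cabs_ge0. Qed.

Lemma cnorm1_mulmx_le M x : cnorm1 (M *m x) <= mxcabs M * cnorm1 x.
Proof.
rewrite /cnorm1 /mxcabs mulr_suml; apply: ler_sum => i _.
rewrite mxE mulr_suml; apply: le_trans; first exact: cabs_sum.
apply: ler_sum => j _; rewrite cabsM ler_wpM2l ?cabs_ge0 //.
exact: cabs_le_cnorm1.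
Qed.

(* Bolzano-Weierstrass, obtained from the compactness of a box in R^(2n). *)
Lemma cnorm1_cluster {T : Type} (F : set_system T) {FF : ProperFilter F}
    (f : T -> 'cV[R[i]]_n) (B : R) :
  (forall t, cnorm1 (f t) <= B) ->
  exists p, forall e, 0 < e -> forall U, F U ->
    exists2 t, U t & cnorm1 (f t - p) < e.
Proof.
move=> fB.
pose r (v : 'cV[R[i]]_n) : 'rV[R]_(n + n) :=
  row_mx (\row_i complex.Re (v i 0)) (\row_i complex.Im (v i 0)).
pose box := [set v : 'rV[R]_(n + n) | forall j, `[- B, B]%classic (v ord0 j)].
have box_compact : compact box.
  by apply: (@rV_compact _ _ (fun=> `[- B, B]%classic)) => j; exact: segment_compact.
have F_box : F (fun t => box (r (f t))).
  apply: filterE => t j /=; rewrite in_itv /= -ler_norml.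
  have fiB k : cabs (f t k 0) <= B := le_trans (cabs_le_cnorm1 _ k) (fB t).
  rewrite -(fintype.splitK j); case: (fintype.split j) => k /=.
  - by rewrite row_mxEl mxE; exact: le_trans (cabs_ge_Re _) (fiB k).
  - by rewrite row_mxEr mxE; exact: le_trans (cabs_ge_Im _) (fiB k).
have [q [_ q_cluster]] := box_compact ((r \o f) @ F) _ F_box.
pose p := \col_i Complex (q ord0 (lshift n i)) (q ord0 (rshift n i)).
exists p => e e0 U FU.
pose e' := e / n.+1%:R / 2.
have e'0 : 0 < e' by rewrite !divr_gt0.
have F_img : F (fun t => ((r \o f) @` U) (r (f t))).
  by apply: filterS FU => t Ut; exists t.
have [_ [[t Ut <-] [_ close]]] := q_cluster _ _ F_img (nbhsx_ballx q _ e'0).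
exists t => //.
have entry_close i : cabs ((f t - p) i 0) <= e / n.+1%:R.
  have := close ord0 (lshift n i); have := close ord0 (rshift n i).
  rewrite /ball /= /r row_mxEl row_mxEr !mxE => hIm hRe.
  apply: le_trans (cabs_le_ReIm _) _.
  move: (f t i 0) hRe hIm => [a b] /= hRe hIm.
  by rewrite (splitr (e / _)) ltW // ltrD // distrC.
apply: (@le_lt_trans _ _ (n%:R * (e / n.+1%:R))).
  rewrite /cnorm1 -[n in n%:R * _]card_ord -sum1_card natr_sum mulr_suml.
  by apply: ler_sum => i _; rewrite mul1r; exact: entry_close.
by rewrite mulrA ltr_pdivrMr ?ltr0Sn // mulrC ltr_pM2l // ltr_nat.
Qed.

End Norm1.

Section VNorm.
Context {R : realType} {n : nat} {N : 'cV[R[i]]_n -> R} (hN : is_vnorm N).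
Implicit Types (x y : 'cV[R[i]]_n) (M : 'M[R[i]]_n).

Lemma vnorm_ge0 x : 0 <= N x.
Proof. by case: hN. Qed.

Lemma vnorm_eq0 x : N x = 0 -> x = 0.
Proof. by case: hN => _ h _ _; apply: h. Qed.

Lemma vnormZ c x : N (c *: x) = cabs c * N x.
Proof. by case: hN => _ _ h _; apply: h. Qed.

Lemma vnormD x y : N (x + y) <= N x + N y.
Proof. by case: hN => _ _ _ h; apply: h. Qed.

Lemma vnorm0 : N 0 = 0.
Proof. by rewrite -(scale0r (0 : 'cV[R[i]]_n)) vnormZ cabs0 mul0r. Qed.

Lemma vnormN x : N (- x) = N x.
Proof. by rewrite -scaleN1r vnormZ cabsN cabs1 mul1r. Qed.

Lemma vnormB x y : N (x - y) = N (y - x).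
Proof. by rewrite -vnormN opprB. Qed.

Lemma vnorm_gt0 {x} : x != 0 -> 0 < N x.
Proof.
move=> x0; rewrite lt0r vnorm_ge0 andbT.
by apply: contra x0 => /eqP /vnorm_eq0 ->.
Qed.

Lemma vnormB_ge x y : N x - N y <= N (x - y).
Proof. by rewrite lerBlDr; apply: le_trans (vnormD _ _); rewrite subrK. Qed.

Lemma vnorm_sum (I : Type) (s : seq I) (P : pred I) (f : I -> 'cV[R[i]]_n) :
  N (\sum_(i <- s | P i) f i) <= \sum_(i <- s | P i) N (f i).
Proof.
elim/big_rec2: _ => [|i u v _ H]; first by rewrite vnorm0.
exact: le_trans (vnormD _ _) (lerD (lexx _) H).
Qed.

Lemma vnorm_real_scale (r : R) x : 0 <= r -> N (Complex r 0 *: x) = r * N x.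
Proof. by move=> r0; rewrite vnormZ cabs_real ger0_norm. Qed.

Lemma vnorm_nhat {x} : x != 0 -> N (nhat N x) = 1.
Proof.
move=> x0; have Nx := vnorm_gt0 x0.
by rewrite vnorm_real_scale ?invr_ge0 ?(ltW Nx) // mulVf // gt_eqF.
Qed.

Lemma vnorm_le_cnorm1 : exists2 C, 0 <= C & forall x, N x <= C * cnorm1 x.
Proof.
pose C := \sum_i N (delta_mx i (0 : 'I_1)).
have C0 : 0 <= C by apply: sumr_ge0 => i _; exact: vnorm_ge0.
exists C => // x; rewrite {1}(matrix_sum_delta x).
apply: le_trans; first exact: vnorm_sum.
rewrite /cnorm1 mulr_sumr; apply: ler_sum => i _ /=.
rewrite big_ord1 vnormZ mulrC ler_wpM2r ?cabs_ge0 //.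
by rewrite /C (bigD1 i) //= lerDl; apply: sumr_ge0 => j _; exact: vnorm_ge0.
Qed.

Lemma vnorm_small e : 0 < e ->
  exists2 d, 0 < d & forall x, cnorm1 x < d -> N x <= e.
Proof.
move=> e0; have [C C0 NC] := vnorm_le_cnorm1.
have C1 : 0 < C + 1 := ltr_wpDl C0 ltr01.
exists (e / (C + 1)); first by rewrite divr_gt0.
move=> x /ltW x_small; apply: le_trans (NC x) _.
apply: le_trans (ler_wpM2l C0 x_small) _.
rewrite mulrC -mulrA ler_piMr ?(ltW e0) //.
by rewrite mulrC ler_pdivrMr // mul1r lerDl.
Qed.

(* Equivalence of norms: otherwise unit vectors for cnorm1 with arbitrarily small
   norm N would cluster at a point p with N p = 0 but cnorm1 p = 1. *)
Lemma cnorm1_le_vnorm : exists2 b, 0 < b & forall x, cnorm1 x <= b * N x.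
Proof.
have [//|no_bound] := pselect (exists2 b, 0 < b & forall x, cnorm1 x <= b * N x).
have small (t : R) : exists y, cnorm1 y = 1 /\ N y <= (`|t| + 1)^-1.
  have b0 : 0 < `|t| + 1 by apply: ltr_wpDl.
  have /existsNP [x] : ~ forall x, cnorm1 x <= (`|t| + 1) * N x.
    by move=> h; apply: no_bound; exists (`|t| + 1).
  move/negP; rewrite -ltNge => hx.
  have s0 : 0 < cnorm1 x.
    by apply: le_lt_trans hx; apply: mulr_ge0; [exact: ltW | exact: vnorm_ge0].
  exists (Complex (cnorm1 x)^-1 0 *: x); split.
    by rewrite cnorm1Z ger0_norm ?invr_ge0 ?ltW // mulVf // gt_eqF.
  rewrite vnorm_real_scale ?invr_ge0 ?(ltW s0) // -(ler_pM2l s0) mulrA mulfV ?gt_eqF //.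
  rewrite mul1r -(ler_pM2r b0) -mulrA mulVf ?gt_eqF // mulr1 mulrC; exact: ltW.
have [y yP] := choice small.
have y1 t : cnorm1 (y t) <= 1 by rewrite (yP t).1.
have [p p_cluster] := cnorm1_cluster (pinfty_nbhs R) y 1 y1.
have Np0 : N p <= 0.
  apply/ler_addgt0Pr => e e0; rewrite add0r.
  have e20 : 0 < e / 2 by rewrite divr_gt0.
  have [d d0 Nd] := vnorm_small _ e20.
  have [t t_big close] := p_cluster d d0 [set t | (e / 2)^-1 < t]
    (ex_intro _ _ (conj (num_real _) (fun t h => h))).
  have t1 : 0 < `|t| + 1 := ltr_wpDl (normr_ge0 t) ltr01.
  have Nyt : N (y t) <= e / 2.
    apply: le_trans (yP t).2 _.
    rewrite -[e / 2]invrK lef_pV2 ?posrE ?invr_gt0 //.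
    by rewrite (le_trans (ltW t_big)) // ler_wpDr // ler_norm.
  have := Nd _ close; have := vnormB_ge p (y t); rewrite vnormB; lra.
have p0 : p = 0 by apply: vnorm_eq0; apply/eqP; rewrite eq_le Np0 vnorm_ge0.
have [t _] := p_cluster 1 ltr01 setT filterT.
by rewrite p0 subr0 (yP t).1 ltxx.
Qed.

Lemma vnorm_unit_cluster {T : Type} (F : set_system T) {FF : ProperFilter F}
    (x : T -> 'cV[R[i]]_n) :
  (forall t, N (x t) = 1) ->
  exists p, N p = 1 /\ forall e, 0 < e -> forall U, F U ->
    exists2 t, U t & N (x t - p) <= e.
Proof.
move=> x1; have [b b0 hb] := cnorm1_le_vnorm.
have xb t : cnorm1 (x t) <= b by apply: le_trans (hb _) _; rewrite x1 mulr1.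
have [p p_cluster] := cnorm1_cluster F x b xb.
have close e : 0 < e -> forall U, F U -> exists2 t, U t & N (x t - p) <= e.
  move=> e0 U FU; have [d d0 Nd] := vnorm_small _ e0.
  by have [t Ut ht] := p_cluster d d0 U FU; exists t => //; exact: Nd.
exists p; split => //; apply/eqP; rewrite eq_le; apply/andP.
split; apply/ler_addgt0Pr => e e0; have [t _ ht] := close e e0 setT filterT.
- by have := vnormB_ge p (x t); rewrite vnormB x1; lra.
- by have := vnormB_ge (x t) p; rewrite x1; lra.
Qed.

Lemma vnorm_mulmx_le M : exists C, forall x, N (M *m x) <= C * N x.
Proof.
have [C C0 NC] := vnorm_le_cnorm1; have [b b0 hb] := cnorm1_le_vnorm.
exists (C * mxcabs M * b) => x; apply: le_trans (NC _) _.
rewrite -!mulrA ler_wpM2l //; apply: le_trans (cnorm1_mulmx_le _ _) _.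
by rewrite ler_wpM2l ?mxcabs_ge0.
Qed.

End VNorm.

Section OpNorm.
Context {R : realType} {n : nat} {N : 'cV[R[i]]_n -> R} (hN : is_vnorm N).
Context {u : 'cV[R[i]]_n} (Nu1 : N u = 1).
Implicit Types (M : 'M[R[i]]_n) (x : 'cV[R[i]]_n).

Lemma opnorm_has_sup M : has_sup [set N (M *m x) | x in [set x | N x = 1]].
Proof.
split; first by exists (N (M *m u)); exists u.
have [C hC] := vnorm_mulmx_le hN M.
by exists C => _ [x /= x1 <-]; rewrite -[C]mulr1 -x1.
Qed.

Lemma opnorm_ub M x : N x = 1 -> N (M *m x) <= opnorm N M.
Proof. by move=> x1; apply: sup_upper_bound (opnorm_has_sup M) _ _; exists x. Qed.

Lemma opnorm_le M x : N (M *m x) <= opnorm N M * N x.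
Proof.
have [->|x0] := eqVneq x 0; first by rewrite mulmx0 !(vnorm0 hN) mulr0.
have Nx := vnorm_gt0 hN x0.
have := opnorm_ub M _ (vnorm_nhat hN x0).
rewrite /nhat -scalemxAr (vnorm_real_scale hN) ?invr_ge0 ?(ltW Nx) //.
by rewrite mulrC ler_pdivrMr.
Qed.

Lemma opnorm_gt0 M x : M *m x != 0 -> 0 < opnorm N M.
Proof.
move=> Mx0; have x0 : x != 0 by apply: contraNneq Mx0 => ->; rewrite mulmx0.
have := lt_le_trans (vnorm_gt0 hN Mx0) (opnorm_le M x).
by rewrite pmulr_lgt0 // vnorm_gt0.
Qed.

Lemma opnorm_approx M e : 0 < e ->
  exists x, N x = 1 /\ opnorm N M - e < N (M *m x).
Proof.
by move=> e0; have [_ [x /= x1 <-] h] := sup_adherent e0 (opnorm_has_sup M); exists x.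
Qed.

End OpNorm.

Section LimsupPinfty.
Context {R : realType}.
Implicit Types (f : R -> R) (c : R).

Lemma limsup_pinfty_le f c : (forall t, f t <= c) -> (limsup_pinfty f <= c%:E)%E.
Proof.
move=> fc; apply: ge_ereal_inf; exists (ereal_sup [set (f x)%:E | x in setT]).
  by exists setT => //; exact: filterT.
by apply: ge_ereal_sup => _ [t _ <-]; rewrite lee_fin.
Qed.

Lemma limsup_pinfty_ge f c :
  (forall e, 0 < e -> forall U, pinfty_nbhs R U -> exists2 t, U t & c - e <= f t) ->
  (c%:E <= limsup_pinfty f)%E.
Proof.
move=> freq; apply: le_ereal_inf_tmp => _ [V FV <-].
apply/lee_subgt0Pr => e e0; have [t Vt cf] := freq e e0 V FV.
by apply: le_ereal_sup_tmp; exists (f t)%:E; [exists t | rewrite -EFinB lee_fin].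
Qed.

End LimsupPinfty.

Section MaxLimsup.
Context {R : realType} {n : nat} {N : 'cV[R[i]]_n -> R} (hN : is_vnorm N).

(* A cluster point of unit vectors x_t with N (M t x_t) >= (1 - 1/(|t|+1)) ||M t||. *)
Lemma opnorm_frequently_approx {u : 'cV[R[i]]_n} (M : R -> 'M[R[i]]_n) :
  N u = 1 -> (forall t, 0 < opnorm N (M t)) ->
  exists p, N p = 1 /\ forall e, 0 < e -> forall U, pinfty_nbhs R U ->
    exists2 t, U t & (1 - e) * opnorm N (M t) <= N (M t *m p).
Proof.
move=> Nu1 op_gt0.
have t1 (t : R) : 0 < `|t| + 1 := ltr_wpDl (normr_ge0 t) ltr01.
have near_max t : exists x, N x = 1 /\
    (1 - (`|t| + 1)^-1) * opnorm N (M t) < N (M t *m x).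
  have e0 : 0 < opnorm N (M t) * (`|t| + 1)^-1 by rewrite mulr_gt0 ?invr_gt0.
  have [x [x1 hx]] := opnorm_approx hN Nu1 (M t) _ e0.
  by exists x; rewrite mulrBl mul1r [_^-1 * _]mulrC.
have [x xP] := choice near_max.
have [p [p1 p_cluster]] := vnorm_unit_cluster hN (pinfty_nbhs R) x (fun t => (xP t).1).
exists p; split => // e e0 U FU.
have e20 : 0 < e / 2 by rewrite divr_gt0.
have F_big : pinfty_nbhs R [set t | (e / 2)^-1 < t].
  by exists (e / 2)^-1; split; [exact: num_real | move=> t].
have [t [Ut t_big] close] := p_cluster _ e20 _ (filterI FU F_big).
exists t => //.
have dt : (`|t| + 1)^-1 <= e / 2.
  rewrite -[e / 2]invrK lef_pV2 ?posrE ?invr_gt0 //.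
  by rewrite (le_trans (ltW t_big)) // ler_wpDr // ler_norm.
have op0 := ltW (op_gt0 t).
have := ler_wpM2l op0 dt; have := ler_wpM2l op0 close.
have := opnorm_le hN Nu1 (M t) (x t - p); have := (xP t).2.
have := vnormB_ge hN (M t *m x t) (M t *m p).
rewrite -mulmxBr !mulrBl !mul1r; lra.
Qed.

Theorem max_limsup_opnorm_ratio (M : R -> 'M[R[i]]_n) (y : 'cV[R[i]]_n) :
  (forall t, M t *m y != 0) ->
  max_limsup_eq1 N (fun z t => (N (M t *m z) / N (M t *m nhat N y))
                               / (opnorm N (M t) / N (M t *m nhat N y))).
Proof.
move=> My0; have y0 : y != 0 by apply: contraNneq (My0 0) => ->; rewrite mulmx0.
have uy := vnorm_nhat hN y0.
have op_gt0 t : 0 < opnorm N (M t) := opnorm_gt0 hN uy _ _ (My0 t).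
have den_gt0 t : 0 < N (M t *m nhat N y).
  rewrite /nhat -scalemxAr (vnorm_real_scale hN) ?invr_ge0 ?vnorm_ge0 //.
  by rewrite mulr_gt0 ?invr_gt0 ?vnorm_gt0.
have ratioE z t : (N (M t *m z) / N (M t *m nhat N y))
    / (opnorm N (M t) / N (M t *m nhat N y)) = N (M t *m z) / opnorm N (M t).
  by rewrite invf_div mulrA divfK ?gt_eqF.
have ratio_le1 z t : N z = 1 -> N (M t *m z) / opnorm N (M t) <= 1.
  by move=> z1; rewrite ler_pdivrMr // mul1r; exact: (opnorm_ub hN uy).
split=> [z z1|]; first by apply: limsup_pinfty_le => t; rewrite ratioE ratio_le1.
have [p [p1 p_freq]] := opnorm_frequently_approx M uy op_gt0.
exists p; split => //; apply/eqP; rewrite eq_le; apply/andP; split.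
  by apply: limsup_pinfty_le => t; rewrite ratioE ratio_le1.
apply: limsup_pinfty_ge => e e0 U FU.
have [t Ut ht] := p_freq e e0 U FU; exists t => //.
by rewrite ratioE ler_pdivlMr.
Qed.

End MaxLimsup.

Section ComplexParts.
Context {R : realType}.
Implicit Types (a b : R[i]).

Lemma ReM a b :
  complex.Re (a * b) = complex.Re a * complex.Re b - complex.Im a * complex.Im b.
Proof. by case: a => ? ?; case: b. Qed.

Lemma ImM a b :
  complex.Im (a * b) = complex.Re a * complex.Im b + complex.Im a * complex.Re b.
Proof. by case: a => ? ?; case: b. Qed.

End ComplexParts.

Section EntrywiseCvg.
Context {R : realType} {m : nat}.

Definition entrywise_cvg (P : nat -> 'M[R[i]]_m) (L : 'M[R[i]]_m) : Prop :=
  forall i j, (fun N => complex.Re (P N i j)) @ \oo --> complex.Re (L i j) /\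
              (fun N => complex.Im (P N i j)) @ \oo --> complex.Im (L i j).

Lemma entrywise_cvg_mulmx {P Q : nat -> 'M[R[i]]_m} {L K : 'M[R[i]]_m} :
  entrywise_cvg P L -> entrywise_cvg Q K ->
  entrywise_cvg (fun N => P N *m Q N) (L *m K).
Proof.
move=> PL QK i j; rewrite mxE raddf_sum [complex.Im _]raddf_sum /=.
have cvg_sum (f : 'I_m -> nat -> R) (l : 'I_m -> R) :
    (forall k, f k @ \oo --> l k) -> (fun N => \sum_k f k N) @ \oo --> \sum_k l k.
  by move=> fl; exact: (cvg_big add_continuous _ (fun k _ => fl k)).
split; under eq_cvg do rewrite mxE raddf_sum /=; apply: cvg_sum => k;
  have [PRe PIm] := PL i k; have [QRe QIm] := QK k j.
- under eq_cvg do rewrite ReM; rewrite ReM; exact: cvgB (cvgM _ _) (cvgM _ _).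
- under eq_cvg do rewrite ImM; rewrite ImM; exact: cvgD (cvgM _ _) (cvgM _ _).
Qed.

End EntrywiseCvg.

(* [R[i]] as a [numFieldType], so that matrices over it carry the topology of
   the entrywise norm. *)
Notation CC R := (Num.NumField.clone R[i] _).

Lemma cvg_mx_entrywise {R : realType} {n : nat}
    (u : nat -> 'M[CC R]_n) (L : 'M[CC R]_n) :
  entrywise_cvg u L -> u @ \oo --> L.
Proof.
move=> uL; apply/cvg_ballP => eps eps0.
have [Ie Re0] : complex.Im eps = 0 /\ 0 < complex.Re eps.
  by move: eps0; rewrite ltcE /= => /andP [/eqP -> ->].
set r := complex.Re eps in Re0.
have r2 : 0 < r / 2 by rewrite divr_gt0.
have hR (ij : 'I_n * 'I_n) : \forall N \near \oo,
   `|complex.Re (L ij.1 ij.2) - complex.Re (u N ij.1 ij.2)| < r / 2 /\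
   `|complex.Im (L ij.1 ij.2) - complex.Im (u N ij.1 ij.2)| < r / 2.
  case: ij => i j /=; apply: filterI.
  - by move/cvgrPdist_lt: (uL i j).1 => /(_ _ r2).
  - by move/cvgrPdist_lt: (uL i j).2 => /(_ _ r2).
near=> N.
have hN : forall ij : 'I_n * 'I_n,
   `|complex.Re (L ij.1 ij.2) - complex.Re (u N ij.1 ij.2)| < r / 2 /\
   `|complex.Im (L ij.1 ij.2) - complex.Im (u N ij.1 ij.2)| < r / 2.
  by near: N; apply: filter_forall => ij; exact: hR.
split => // i j; have [h1 h2] := hN (i, j).
rewrite /ball /= normc_def ltcE /= Ie eqxx /= -/r.
have := @cabs_le_ReIm R (L i j - u N i j).
have -> : cabs (L i j - u N i j) =
    Num.sqrt (complex.Re (L i j - u N i j) ^+ 2 + complex.Im (L i j - u N i j) ^+ 2).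
  by case: (L i j - u N i j).
move=> h; apply: le_lt_trans h _.
rewrite !raddfB /= (splitr r); exact: ltrD.
Unshelve. all: by end_near.
Qed.

Section ExpmxEntries.
Context {R : realType} {n : nat}.
Implicit Types (X : 'M[R[i]]_n).

Lemma cabs_exprmx_le X k i j : cabs ((X ^+ k) i j) <= mxcabs X ^+ k.
Proof.
elim: k i j => [|k IH] i j.
  by rewrite expr0 mxE; case: (i == j); rewrite ?cabs1 ?cabs0.
rewrite exprSr -mulmxE mxE; apply: le_trans; first exact: cabs_sum.
apply: (@le_trans _ _ (\sum_l mxcabs X ^+ k * cabs (X l j))).
  by apply: ler_sum => l _; rewrite cabsM ler_wpM2r ?cabs_ge0.
rewrite -mulr_sumr exprSr ler_wpM2l ?exprn_ge0 ?mxcabs_ge0 //.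
apply: ler_sum => l _; rewrite (bigD1 j) //= lerDl.
by apply: sumr_ge0 => k' _; exact: cabs_ge0.
Qed.

Definition expmx_partial X (N : nat) : 'M[R[i]]_n := \sum_(k < N) (k`!%:R^-1 *: X ^+ k).

Definition expmx_coef X i j (k : nat) : R[i] := k`!%:R^-1 * (X ^+ k) i j.

Lemma expmx_partialE X N i j :
  expmx_partial X N i j = \sum_(0 <= k < N) expmx_coef X i j k.
Proof. by rewrite summxE big_mkord; apply: eq_bigr => k _; rewrite mxE. Qed.

Lemma cabs_expmx_coef X i j k : cabs (expmx_coef X i j k) <= exp_coeff (mxcabs X) k.
Proof.
rewrite /expmx_coef /exp_coeff /= cabsM cabs_natrV mulrC.
by rewrite ler_wpM2r ?invr_ge0 // cabs_exprmx_le.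
Qed.

Lemma is_cvg_series_expmx_coef (phi : R[i] -> R) X i j :
  (forall c, `|phi c| <= cabs c) -> cvgn (series (fun k => phi (expmx_coef X i j k))).
Proof.
move=> phi_le; apply: normed_cvg.
apply: (@series_le_cvg _ _ (exp_coeff (mxcabs X))) => [k|k|k|].
- exact: normr_ge0.
- exact/exp_coeff_ge0/mxcabs_ge0.
- exact: le_trans (phi_le _) (cabs_expmx_coef _ _ _ _).
- exact: is_cvg_series_exp_coeff.
Qed.

Lemma Re_expmx_partial X i j :
  (fun N => complex.Re (expmx_partial X N i j)) =
  series (fun k => complex.Re (expmx_coef X i j k)).
Proof. by apply: funext => N; rewrite expmx_partialE raddf_sum. Qed.

Lemma Im_expmx_partial X i j :
  (fun N => complex.Im (expmx_partial X N i j)) =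
  series (fun k => complex.Im (expmx_coef X i j k)).
Proof. by apply: funext => N; rewrite expmx_partialE raddf_sum. Qed.

Lemma entrywise_cvg_expmx X : entrywise_cvg (expmx_partial X) (expmx X).
Proof.
pose L : 'M[R[i]]_n := \matrix_(i, j)
  Complex (limn (series (fun k => complex.Re (expmx_coef X i j k))))
          (limn (series (fun k => complex.Im (expmx_coef X i j k)))).
have conv : entrywise_cvg (expmx_partial X) L.
  move=> i j; rewrite !mxE /= Re_expmx_partial Im_expmx_partial.
  by split; apply: is_cvg_series_expmx_coef; [exact: cabs_ge_Re | exact: cabs_ge_Im].
suff -> : expmx X = L by [].
exact: (cvg_lim (@norm_hausdorff _ _) (@cvg_mx_entrywise R n _ _ conv)).
Qed.

End ExpmxEntries.

Section CauchyProduct.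
Context {F : numFieldType} {A : algType F}.

Lemma factV_exprD_comm (x y : A) (N : nat) : GRing.comm x y ->
  (N`!%:R^-1 : F) *: (x + y) ^+ N =
  \sum_(0 <= i < N.+1)
    ((i`!%:R^-1 : F) *: x ^+ i) * (((N - i)`!%:R^-1 : F) *: y ^+ (N - i)).
Proof.
move=> cxy; have cyx : GRing.comm y x by [].
rewrite addrC (exprDn_comm _ cyx) scaler_sumr big_mkord.
apply: eq_bigr => i _; have iN : (i <= N)%N by rewrite -ltnS.
rewrite -scalerAl -scalerAr scalerA.
have -> : y ^+ (N - i) * x ^+ i = x ^+ i * y ^+ (N - i).
  by apply: commrX; apply/esym; apply: commrX.
rewrite -[_ *+ 'C(N, i)](@scaler_nat F) scalerA; congr (_ *: _).
have fact_neq0 k : (k`!%:R : F) != 0 by rewrite pnatr_eq0 -lt0n fact_gt0.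
apply: (mulfI (fact_neq0 N)); rewrite mulrA mulfV // mul1r -(bin_fact iN) !natrM.
by field; rewrite !fact_neq0.
Qed.

Lemma exp_partial_triangle_comm (x y : A) (N : nat) : GRing.comm x y ->
  \sum_(0 <= i < N) \sum_(0 <= j < N - i)
      ((i`!%:R^-1 : F) *: x ^+ i) * ((j`!%:R^-1 : F) *: y ^+ j)
  = \sum_(0 <= k < N) (k`!%:R^-1 : F) *: (x + y) ^+ k.
Proof.
move=> cxy; elim: N => [|N IH]; first by rewrite !big_geq.
rewrite [RHS]big_nat_recr //= -IH factV_exprD_comm //.
rewrite [LHS](@eq_big_nat _ _ _ 0 N.+1 _ (fun i =>
    \sum_(0 <= j < N - i) ((i`!%:R^-1 : F) *: x ^+ i) * ((j`!%:R^-1 : F) *: y ^+ j)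
    + ((i`!%:R^-1 : F) *: x ^+ i) * (((N - i)`!%:R^-1 : F) *: y ^+ (N - i)))).
  by rewrite big_split /= big_nat_recr //= subnn [X in _ + X + _]big_geq // addr0.
by move=> i /andP [_ iN]; rewrite subSn // big_nat_recr.
Qed.

End CauchyProduct.

Section ExpTail.
Context {R : realType} (c : R).

Definition exp_tail (N : nat) : R :=
  \sum_(0 <= i < N) \sum_(N - i <= j < N) exp_coeff c i * exp_coeff c j.

Lemma series_exp_coeff_sqr N :
  series (exp_coeff c) N * series (exp_coeff c) N =
  series (exp_coeff (c + c)) N + exp_tail N.
Proof.
rewrite /series /= mulr_suml.
have -> : \sum_(0 <= k < N) exp_coeff (c + c) k =
    \sum_(0 <= k < N) ((k`!%:R^-1 : R) *: ((c : R^o) + c) ^+ k).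
  by apply: eq_bigr => k _; rewrite /exp_coeff /= mulrC.
rewrite -(@exp_partial_triangle_comm R R^o c c N) // /exp_tail -big_split /=.
apply: eq_bigr => i _; rewrite mulr_sumr (@big_cat_nat _ _ _ (N - i)) //= ?leq_subr //.
congr (_ + _); apply: eq_bigr => j _.
by rewrite /exp_coeff /= [_ *: _]mulrC [_ *: c ^+ j]mulrC.
Qed.

Lemma exp_tail_cvg0 : exp_tail @ \oo --> 0.
Proof.
have hS : series (exp_coeff c) @ \oo --> expR c := is_cvg_series_exp_coeff c.
have hT : series (exp_coeff (c + c)) @ \oo --> expR (c + c) :=
  is_cvg_series_exp_coeff (c + c).
have -> : exp_tail = fun N => series (exp_coeff c) N * series (exp_coeff c) N
    - series (exp_coeff (c + c)) N.
  by apply: funext => N; rewrite series_exp_coeff_sqr addrC addKr.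
by rewrite -[0](subrr (expR (c + c))) [X in X - _]expRD; exact: cvgB (cvgM hS hS) hT.
Qed.

End ExpTail.

Lemma cvg_eq_of_dist_le {R : realType} {a B : nat -> R} {x y : R} :
  a @ \oo --> x -> B @ \oo --> 0 ->
  (forall N, (0 < N)%N -> `|a N - y| <= B N) -> x = y.
Proof.
move=> ax B0 aB; apply/eqP; rewrite -subr_eq0 -normr_le0.
apply/ler_addgt0Pr => e e0; rewrite add0r.
have e20 : 0 < e / 2 by rewrite divr_gt0.
move/cvgrPdist_lt: ax => /(_ _ e20) ax; move/cvgrPdist_lt: B0 => /(_ _ e20) B0.
near \oo => N.
have h1 : `|x - a N| < e / 2 by near: N.
have h2 : `|0 - B N| < e / 2 by near: N.
have N0 : (0 < N)%N by near: N; exact: nbhs_infty_gt.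
have h3 : `|a N - y| < e / 2.
  by apply: le_lt_trans (aB N N0) (le_lt_trans (ler_norm _) _); rewrite -normrN -sub0r.
apply: le_trans (ler_distD (a N) x y) _.
by rewrite (splitr e) ltW // ltrD.
Unshelve. all: by end_near.
Qed.

Section ExpmxInverse.
Context {R : realType} {n : nat} (X : 'M[R[i]]_n.+1).

Let cauchy_term i j : 'M[R[i]]_n.+1 :=
  ((i`!%:R^-1 : R[i]) *: X ^+ i) * ((j`!%:R^-1 : R[i]) *: (- X) ^+ j).

Lemma expmx_partial0 N : expmx_partial (0 : 'M[R[i]]_n.+1) N.+1 = 1.
Proof.
rewrite /expmx_partial big_ord_recl /= expr0 fact0 invr1 scale1r big1 ?addr0 //.
by move=> k _; rewrite expr0n /= scaler0.
Qed.

(* By the binomial theorem ([X] and [- X] commute), [expmx_partial 0 N] is the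
   part of total degree < N of the Cauchy product. *)
Lemma expmx_partial_mulN_sub N :
  expmx_partial X N * expmx_partial (- X) N - expmx_partial 0 N =
  \sum_(0 <= i < N) \sum_(N - i <= j < N) cauchy_term i j.
Proof.
have cX : GRing.comm X (- X) by apply: commrN; exact: commr_refl.
have head : \sum_(0 <= i < N) \sum_(0 <= j < N - i) cauchy_term i j = expmx_partial 0 N.
  by rewrite /cauchy_term exp_partial_triangle_comm // subrr /expmx_partial big_mkord.
have prod : expmx_partial X N * expmx_partial (- X) N =
    \sum_(0 <= i < N) \sum_(0 <= j < N) cauchy_term i j.
  rewrite /expmx_partial mulr_suml big_mkord; apply: eq_bigr => i _.
  by rewrite mulr_sumr big_mkord.
rewrite prod -head -sumrB; apply: eq_bigr => i _.
by rewrite (@big_cat_nat _ _ _ (N - i)) //= ?leq_subr // addrC addrK.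
Qed.

Let e := exp_coeff (mxcabs X).

Lemma cabs_cauchy_term_le i j a b : cabs (cauchy_term i j a b) <= n.+1%:R * (e i * e j).
Proof.
have mxcabsN : mxcabs (- X) = mxcabs X.
  by apply: eq_bigr => k _; apply: eq_bigr => l _; rewrite mxE cabsN.
rewrite /cauchy_term -mulmxE mxE; apply: le_trans; first exact: cabs_sum.
apply: (@le_trans _ _ (\sum_(l < n.+1) e i * e j)).
  2: by rewrite sumr_const card_ord mulr_natl.
apply: ler_sum => l _; rewrite !mxE cabsM.
have := cabs_expmx_coef (- X) l b j; rewrite mxcabsN => h2.
by apply: ler_pM (cabs_ge0 _) (cabs_ge0 _) (cabs_expmx_coef X a l i) h2.
Qed.

Lemma cabs_expmx_partial_mulN_sub N a b :
  cabs ((expmx_partial X N * expmx_partial (- X) N - expmx_partial 0 N) a b)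
  <= n.+1%:R * exp_tail (mxcabs X) N.
Proof.
rewrite expmx_partial_mulN_sub summxE /exp_tail mulr_sumr.
apply: le_trans; first exact: cabs_sum.
apply: ler_sum => i _; rewrite summxE mulr_sumr; apply: le_trans; first exact: cabs_sum.
by apply: ler_sum => j _; exact: cabs_cauchy_term_le.
Qed.

Lemma expmx_mulN : expmx X * expmx (- X) = 1.
Proof.
have prod_cvg :=
  entrywise_cvg_mulmx (entrywise_cvg_expmx X) (entrywise_cvg_expmx (- X)).
have tail0 : (fun N => n.+1%:R * exp_tail (mxcabs X) N) @ \oo --> 0.
  by rewrite -(mulr0 n.+1%:R); apply: cvgMl_tmp; exact: exp_tail_cvg0.
have close N a b : (0 < N)%N ->
    cabs ((expmx_partial X N *m expmx_partial (- X) N) a b - (1 : 'M[R[i]]_n.+1) a b)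
    <= n.+1%:R * exp_tail (mxcabs X) N.
  have subE (P Q : 'M[R[i]]_n.+1) : (P - Q) a b = P a b - Q a b by rewrite !mxE.
  case: N => [//|N] _; rewrite -(expmx_partial0 N) -subE.
  exact: cabs_expmx_partial_mulN_sub.
apply/matrixP => a b; rewrite -mulmxE; have [cRe cIm] := prod_cvg a b.
apply/eqP; rewrite eq_complex; apply/andP; split; apply/eqP.
- apply: (cvg_eq_of_dist_le cRe tail0) => N N0.
  by rewrite -raddfB (le_trans (cabs_ge_Re _)) ?close.
- apply: (cvg_eq_of_dist_le cIm tail0) => N N0.
  by rewrite -raddfB (le_trans (cabs_ge_Im _)) ?close.
Qed.

End ExpmxInverse.

Lemma etA_mulmx_neq0 {R : realType} {n : nat} (A : 'M[R[i]]_n) (y : 'cV[R[i]]_n) t :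
  y != 0 -> etA A t *m y != 0.
Proof.
case: n A y => [|n] A y y0; first by move: y0; rewrite (flatmx0 y) eqxx.
apply: contraNneq y0 => Ey0; apply/eqP.
have inv : expmx (- (Complex t 0 *: A)) *m etA A t = 1%:M.
  by have := expmx_mulN (- (Complex t 0 *: A)); rewrite opprK.
have := congr1 (mulmx (expmx (- (Complex t 0 *: A)))) Ey0.
by rewrite mulmxA inv mul1mx mulmx0.
Qed.

Section JordanQ1.
Context {R : realType} {n p : nat} {A : 'M[R[i]]_n} {lam : 'I_p -> R[i]}
  {d : 'I_p -> nat} {m : 'I_p -> nat -> nat}
  {v : 'I_p -> nat -> nat -> 'cV[R[i]]_n} {w : 'I_p -> nat -> nat -> 'rV[R[i]]_n}.
Hypothesis hJ : jordan_basis A lam d m v w.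

Lemma w_mulmx_Q1 (i0 : 'I_p) (j0 : nat) t :
  (j0 < d i0)%N -> inL1 lam i0 -> m i0 j0 = M1 lam d m ->
  w i0 j0 0%N *m Q1 lam d m v w t
  = cis (complex.Im (lam i0) * t) *: w i0 j0 (M1 lam d m).-1.
Proof.
move: hJ => [[_ _ m_gt0 _ _] [_ biorth]] j0_lt L1 mM.
set M := M1 lam d m in mM *.
have term i j : (j < d i)%N -> w i0 j0 0%N *m
      (cis (complex.Im (lam i) * t) *: (v i j 0%N *m w i j M.-1))
    = ((i0 == i) && (j0 == j))%:R *: (cis (complex.Im (lam i) * t) *: w i j M.-1).
  move=> j_lt; rewrite -scalemxAr mulmxA biorth ?m_gt0 // mul_scalar_mx andbT.
  by rewrite scalerA mulrC -scalerA.
rewrite /Q1 -/M mulmx_sumr (bigD1 i0) //= [X in _ + X]big1 ?addr0; last first.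
  move=> i /andP [_ i_neq]; rewrite mulmx_sumr big1 // => j _.
  by rewrite term // eq_sym (negbTE i_neq) scale0r.
rewrite mulmx_sumr (bigD1 (Ordinal j0_lt)) /= ?mM ?eqxx // [X in _ + X]big1 ?addr0.
  by rewrite term // !eqxx scale1r.
move=> j /andP [_ j_neq]; rewrite term // eqxx /=.
suff /negbTE -> : j0 != j by rewrite scale0r.
by apply: contra j_neq => /eqP j0E; apply/eqP/val_inj.
Qed.

Lemma Q1_mulmx_neq0 (y : 'cV[R[i]]_n) t :
  RLGE lam d m w y -> Q1 lam d m v w t *m y != 0.
Proof.
move=> [i0 [j0 [L1 j0_lt mM wy]]]; apply: contraNneq wy => Qy0; apply/eqP.
have := congr1 (mulmx (w i0 j0 0%N)) Qy0.
rewrite mulmxA w_mulmx_Q1 // mulmx0 -scalemxAl => /eqP.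
by rewrite scaler_eq0 (negbTE (cis_neq0 _)) => /eqP.
Qed.

End JordanQ1.

Theorem mainTheorem3 (R : realType) (n : nat) (A : 'M[R[i]]_n)
    (N : 'cV[R[i]]_n -> R) (y0 : 'cV[R[i]]_n) :
  is_vnorm N -> y0 != 0 ->
  max_limsup_eq1 N (fun z t => K3 N A y0 z t / K2 N A y0 t) /\
  (forall (p : nat) (lam : 'I_p -> R[i]) (d : 'I_p -> nat) (m : 'I_p -> nat -> nat)
      (v : 'I_p -> nat -> nat -> 'cV[R[i]]_n) (w : 'I_p -> nat -> nat -> 'rV[R[i]]_n),
    jordan_basis A lam d m v w ->
    RLGE lam d m w y0 ->
    max_limsup_eq1 N (fun z t => Kinf3 N (Q1 lam d m v w) y0 z t
                                 / Kinf2 N (Q1 lam d m v w) y0 t)).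
Proof.
move=> hN y0_neq0; split.
  rewrite /K3 /K2.
  exact: max_limsup_opnorm_ratio hN (etA A) y0 (fun t => etA_mulmx_neq0 A y0 t y0_neq0).
move=> p lam d m v w hJ RLGE_y0; rewrite /Kinf3 /Kinf2.
exact: max_limsup_opnorm_ratio hN _ y0 (fun t => Q1_mulmx_neq0 hJ y0 t RLGE_y0).
Qed.
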